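(* In the finite-sum setting, assume $f$ is convex and $L$-smooth with minimizer $x^\ast$, and that $\tilde\nabla_1$ satisfies the strong growth condition with constant $\rho_1\ge1$. Let $K\in\{1,\dots,N\}$, $\bar\rho_K:=\frac{\rho_1(N-K)+(K-1)N}{K(N-1)}$, and run SNAG with batch size $K$ and parameters $s=\frac{1}{L\bar\rho_K}$, $\eta_n=\frac{1}{L\bar\rho_K^2}\frac{n+1}2$, $\beta=1$, $\alpha_n=\frac{n^2/(n+1)}{2+n^2/(n+1)}$. Then, with $\Delta_K:=\frac{N-K}{N-1}+\frac N{\rho_1}\frac{K-1}{N-1}$, we have $\mathbb{E}[f(x_n)-f^\ast]\le\varepsilon$ as soon as the number of component-gradient evaluations $nK$ satisfies $$nK\ge\Delta_K\,\rho_1\sqrt{\frac{2L}{\varepsilon}}\|x_0-x^\ast\|.$$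
   Context: Finite-sum setting: $N\ge2$, $f_i:\mathbb{R}^d\to\mathbb{R}$ continuously differentiable, $f=\frac1N\sum_if_i$, $f^\ast=\min f$. For $K\in\{1,\dots,N\}$, $B$ is a uniformly random subset of $\{1,\dots,N\}$ of size $K$ and $\tilde\nabla_K(x)=\frac1K\sum_{i\in B}\nabla f_i(x)$; each iteration with batch size $K$ evaluates $K$ gradients $\nabla f_i$. Strong growth condition with constant $\rho_K\ge 1$: $\mathbb{E}\|\tilde\nabla_K(x)\|^2\le\rho_K\|\nabla f(x)\|^2$ for all $x$. SNAG: $x_0=z_0$; $y_n=\alpha_nx_n+(1-\alpha_n)z_n$, $x_{n+1}=y_n-s\tilde\nabla_K(y_n)$, $z_{n+1}=\beta z_n+(1-\beta)y_n-\eta_n\tilde\nabla_K(y_n)$, same batch in both updates of an iteration, independent batches across iterations. *)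

From HB Require Import structures.
From mathcomp Require Import all_boot all_order all_algebra.
From mathcomp Require Import all_classical all_reals all_analysis.
Set Implicit Arguments. Unset Strict Implicit. Unset Printing Implicit Defensive.
Import Order.TTheory GRing.Theory Num.Theory.
Import numFieldNormedType.Exports.
Local Open Scope ring_scope.

Section Defs.
Variable R : realType.
Variable d : nat.
Notation vec := 'rV[R]_d.

Definition dot (u v : vec) : R := \sum_(i < d) u 0 i * v 0 i.
Definition enorm (u : vec) : R := Num.sqrt (dot u u).

Definition is_gradient (f : vec -> R) (g : vec -> vec) : Prop :=
  forall x : vec, differentiable f x /\ forall v : vec, 'd f x v = dot (g x) v.

Definition convex_fun (f : vec -> R) : Prop :=
  forall (x y : vec) (t : R), 0 <= t -> t <= 1 ->
    f (t *: x + (1 - t) *: y) <= t * f x + (1 - t) * f y.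

Definition lipschitz_grad (L : R) (g : vec -> vec) : Prop :=
  forall x y : vec, enorm (g x - g y) <= L * enorm (x - y).

Variable N : nat.

Definition favg (F : 'I_N -> vec -> R) (x : vec) : R :=
  N%:R^-1 * \sum_(i < N) F i x.
Definition gavg (G : 'I_N -> vec -> vec) (x : vec) : vec :=
  N%:R^-1 *: \sum_(i < N) G i x.

Definition batch_grad (G : 'I_N -> vec -> vec) (K : nat) (B : {set 'I_N})
  (x : vec) : vec := K%:R^-1 *: \sum_(i in B) G i x.

(* Strong growth condition for the single-sample estimator (K = 1):
   E ||grad f_i(x)||^2 <= rho ||grad f(x)||^2, i uniform in {1..N}. *)
Definition strong_growth1 (G : 'I_N -> vec -> vec) (rho : R) : Prop :=
  forall x : vec,
    N%:R^-1 * \sum_(i < N) enorm (G i x) ^+ 2 <= rho * enorm (gavg G x) ^+ 2.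

Fixpoint snag (G : 'I_N -> vec -> vec) (K : nat) (s beta : R)
  (alpha eta : nat -> R) (x0 : vec) (bs : nat -> {set 'I_N}) (n : nat)
  : vec * vec :=
  match n with
  | 0 => (x0, x0)
  | m.+1 =>
      let: (x, z) := snag G K s beta alpha eta x0 bs m in
      let y := alpha m *: x + (1 - alpha m) *: z in
      let gy := batch_grad G K (bs m) y in
      (y - s *: gy, beta *: z + (1 - beta) *: y - eta m *: gy)
  end.

Definition batch_ok (K : nat) (t : seq {set 'I_N}) : bool :=
  all (fun B : {set 'I_N} => #|B| == K) t.

(* Expectation over n independent uniformly random K-subsets:
   the uniform average over all n-tuples of K-subsets. *)
Definition Exp_batches (K n : nat) (phi : (nat -> {set 'I_N}) -> R) : R :=
  (\sum_(t : n.-tuple {set 'I_N} | batch_ok K t) phi (fun j => nth (finset.set0 : {set 'I_N}) (tval t) j))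
  / #|[set t : n.-tuple {set 'I_N} | batch_ok K t]|%:R.

End Defs.

(* The potential E_n = n^2 / (4 L r^2) (f x_n - f^* ) + |z_n - x^*|^2 / 2 does not increase in
   expectation along SNAG, where r = rho_K is the strong growth constant of the K-batch gradient.
   That constant comes from counting batches: index i lies in a uniform K-batch with probability
   K/N and a pair i <> j with probability K(K-1)/(N(N-1)), so the batch gradient is unbiased and
   its second moment is at most rho_K |grad f|^2.  In one step the descent lemma bounds
   E f(x_{n+1}), the square expansion bounds E |z_{n+1} - x^*|^2, and with the chosen s and eta the
   two second-moment terms cancel exactly; what remains is handled by convexity at the coupling
   point y_n, where 2 (n+1) (z_n - y_n) = n^2 (y_n - x_n).  Hence
   n^2 E[f x_n - f^*] <= 2 L rho_K^2 |x_0 - x^*|^2, and Delta_K rho_1 = K rho_K turns the assumed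
   number n K of gradient evaluations into this bound being at most eps. *)
From HB Require Import structures.
From mathcomp Require Import all_boot all_order all_algebra.
From mathcomp Require Import all_classical all_reals all_analysis.
From mathcomp Require Import perm ring lra zify.
Set Implicit Arguments. Unset Strict Implicit. Unset Printing Implicit Defensive.
Import Order.TTheory GRing.Theory Num.Theory.
Import numFieldNormedType.Exports.
Local Open Scope ring_scope.

Section Dot.
Variables (R : realType) (d : nat).
Implicit Types (u v w : 'rV[R]_d) (a : R).

Lemma dotC u v : dot u v = dot v u.
Proof. by apply: eq_bigr => i _; rewrite mulrC. Qed.

Lemma dotDl u v w : dot (u + v) w = dot u w + dot v w.
Proof. by rewrite /dot -big_split; apply: eq_bigr => i _; rewrite !mxE mulrDl. Qed.

Lemma dotZl a u v : dot (a *: u) v = a * dot u v.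
Proof. by rewrite /dot mulr_sumr; apply: eq_bigr => i _; rewrite !mxE mulrA. Qed.

Lemma dotNl u v : dot (- u) v = - dot u v.
Proof. by rewrite -scaleN1r dotZl mulN1r. Qed.

Lemma dotBl u v w : dot (u - v) w = dot u w - dot v w.
Proof. by rewrite dotDl dotNl. Qed.

Lemma dotDr u v w : dot u (v + w) = dot u v + dot u w.
Proof. by rewrite dotC dotDl !(dotC u). Qed.

Lemma dotZr a u v : dot u (a *: v) = a * dot u v.
Proof. by rewrite dotC dotZl dotC. Qed.

Lemma dotBr u v w : dot u (v - w) = dot u v - dot u w.
Proof. by rewrite dotC dotBl !(dotC u). Qed.

Lemma dot_suml (I : finType) (P : pred I) (F : I -> 'rV[R]_d) w :
  dot (\sum_(i | P i) F i) w = \sum_(i | P i) dot (F i) w.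
Proof.
apply: (big_morph (fun u => dot u w)) => [u v|]; first exact: dotDl.
by rewrite /dot big1 // => i _; rewrite mxE mul0r.
Qed.

Lemma dot_sumr (I : finType) (P : pred I) (F : I -> 'rV[R]_d) w :
  dot w (\sum_(i | P i) F i) = \sum_(i | P i) dot w (F i).
Proof. by rewrite dotC dot_suml; apply: eq_bigr => i _; rewrite dotC. Qed.

Lemma dotBB u v : dot (u - v) (u - v) = dot u u - 2 * dot u v + dot v v.
Proof. by rewrite dotBl !dotBr (dotC v u); ring. Qed.

Lemma dot_ge0 u : 0 <= dot u u.
Proof. by apply: sumr_ge0 => i _; rewrite -expr2 sqr_ge0. Qed.

Lemma dot_eq0 u : (dot u u == 0) = (u == 0).
Proof.
apply/idP/eqP => [|->]; last by rewrite /dot big1 // => i _; rewrite mxE mul0r.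
rewrite psumr_eq0 => [/allP u0|i _]; last by rewrite -expr2 sqr_ge0.
apply/matrixP => i j; rewrite (ord1 i) mxE.
by apply/eqP; rewrite -sqrf_eq0 expr2; exact: implyP (u0 j (mem_index_enum j)) isT.
Qed.

Lemma enorm_ge0 u : 0 <= enorm u.
Proof. exact: sqrtr_ge0. Qed.

Lemma sqr_enorm u : enorm u ^+ 2 = dot u u.
Proof. by rewrite sqr_sqrtr // dot_ge0. Qed.

Lemma enorm_eq0 u : (enorm u == 0) = (u == 0).
Proof. by rewrite -sqrf_eq0 sqr_enorm dot_eq0. Qed.

Lemma enormZ a u : enorm (a *: u) = `|a| * enorm u.
Proof. by rewrite /enorm dotZl dotZr mulrA -expr2 sqrtrM ?sqr_ge0 // sqrtr_sqr. Qed.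

(* AM-GM [2 <u, v> <= c |u|^2 + |v|^2 / c] stands in for Cauchy-Schwarz. *)
Lemma dot_le_enorm u v c : 0 < c -> enorm v <= c * enorm u -> dot u v <= c * dot u u.
Proof.
move=> c0 vu.
have amgm : 2 * dot u v <= c * dot u u + c^-1 * dot v v.
  rewrite /dot !mulr_sumr -big_split /= ler_sum // => i _.
  have -> : c * (u 0 i * u 0 i) + c^-1 * (v 0 i * v 0 i) =
      2 * (u 0 i * v 0 i) + c^-1 * (c * u 0 i - v 0 i) ^+ 2.
    by field; rewrite gt_eqF.
  by rewrite lerDl mulr_ge0 ?sqr_ge0 // invr_ge0 ltW.
have vv : c^-1 * dot v v <= c * dot u u.
  rewrite ler_pdivrMl // -!sqr_enorm mulrA -expr2 -exprMn.
  by rewrite ler_sqr ?nnegrE ?enorm_ge0 ?mulr_ge0 ?enorm_ge0 // ltW.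
lra.
Qed.

End Dot.

Section BatchAverage.
Variables (R : realType) (N K : nat).
Local Notation batch := {set 'I_N}.

Definition batch_avg (X : batch -> R) : R :=
  (\sum_(B : batch | #|B| == K) X B) / 'C(N, K)%:R.

Hypothesis KN : (K <= N)%N.

Lemma binr_gt0 : 0 < 'C(N, K)%:R :> R.
Proof. by rewrite ltr0n bin_gt0. Qed.

Lemma sum_batches_cst (c : R) : \sum_(B : batch | #|B| == K) c = c * 'C(N, K)%:R.
Proof.
rewrite (eq_bigl (mem [set B : batch | #|B| == K])) => [|B]; last by rewrite !inE.
by rewrite sumr_const card_draws card_ord mulr_natr.
Qed.

Lemma batch_avg_cst c : batch_avg (fun _ => c) = c.
Proof. by rewrite /batch_avg sum_batches_cst mulfK // gt_eqF // binr_gt0. Qed.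

Lemma eq_batch_avg X Y : (forall B : batch, #|B| == K -> X B = Y B) -> batch_avg X = batch_avg Y.
Proof. by move=> XY; rewrite /batch_avg (eq_bigr _ XY). Qed.

Lemma batch_avgD X Y : batch_avg (fun B => X B + Y B) = batch_avg X + batch_avg Y.
Proof. by rewrite /batch_avg big_split mulrDl. Qed.

Lemma batch_avgZ c X : batch_avg (fun B => c * X B) = c * batch_avg X.
Proof. by rewrite /batch_avg -mulr_sumr mulrA. Qed.

Lemma ler_batch_avg X Y : (forall B, X B <= Y B) -> batch_avg X <= batch_avg Y.
Proof. by move=> XY; rewrite ler_wpM2r ?ler_sum // invr_ge0 ltW // binr_gt0. Qed.

Lemma batch_avg_sum (I : finType) (X : I -> batch -> R) :
  batch_avg (fun B => \sum_i X i B) = \sum_i batch_avg (X i).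
Proof. by rewrite /batch_avg exchange_big mulr_suml. Qed.

Lemma batch_avg_perm (s : {perm 'I_N}) X : batch_avg (fun B => X (s @: B)) = batch_avg X.
Proof.
have sB : injective (fun B : batch => s @: B) by apply: imset_inj; exact: perm_inj.
rewrite /batch_avg [in RHS](reindex (fun B : batch => s @: B)) /=; last first.
  by apply: onW_bij; exact: injF_bij.
by congr (_ / _); apply: eq_bigl => B; rewrite card_imset //; exact: perm_inj.
Qed.

Definition pair_prob (i j : 'I_N) : R := batch_avg (fun B => ((i \in B) && (j \in B))%:R).

Lemma pair_prob_perm (s : {perm 'I_N}) i j : pair_prob (s i) (s j) = pair_prob i j.
Proof.
rewrite /pair_prob -(batch_avg_perm s).
by congr batch_avg; apply: funext => B; rewrite !mem_imset //; exact: perm_inj.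
Qed.

Lemma pair_prob_diag i j : pair_prob i i = pair_prob j j.
Proof. by rewrite -(pair_prob_perm (tperm i j)) tpermL. Qed.

Lemma pair_prob_off i j i' j' : i != j -> i' != j' -> pair_prob i j = pair_prob i' j'.
Proof.
move=> ij ij'; pose t := tperm i i'.
have tj : t j != i' by rewrite -(tpermL i i') -/t (inj_eq perm_inj) eq_sym.
pose u := tperm (t j) j'.
have ui : u i' = i' by rewrite /u tpermD // eq_sym.
by rewrite -(pair_prob_perm t) -(pair_prob_perm u) /t tpermL -/t ui /u tpermL.
Qed.

Lemma sum_mem_card (B : batch) : \sum_i ((i \in B)%:R : R) = #|B|%:R.
Proof. by rewrite -sum1_card natr_sum [RHS]big_mkcond; apply: eq_bigr => i _; case: (i \in B). Qed.

Lemma sum_mem_mul (B : batch) (a : 'I_N -> R) :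
  \sum_(i in B) a i = \sum_i (i \in B)%:R * a i.
Proof. by rewrite big_mkcond; apply: eq_bigr => i _; case: (i \in B); rewrite ?mul1r ?mul0r. Qed.

Lemma sum_pair_prob_diag : \sum_i pair_prob i i = K%:R.
Proof.
rewrite -batch_avg_sum -[RHS]batch_avg_cst; apply: eq_batch_avg => B /eqP <-.
by under eq_bigr do rewrite andbb; exact: sum_mem_card.
Qed.

Lemma sum_pair_prob : \sum_i \sum_j pair_prob i j = K%:R ^+ 2.
Proof.
under eq_bigr do rewrite -batch_avg_sum.
rewrite -batch_avg_sum -[RHS]batch_avg_cst; apply: eq_batch_avg => B /eqP <-.
under eq_bigr do under eq_bigr do rewrite -mulnb natrM.
by rewrite -big_distrlr /= sum_mem_card expr2.
Qed.

End BatchAverage.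

Section PairProbabilities.
Variables (R : realType) (N K : nat).
Hypothesis KN : (K <= N)%N.
Local Notation pair_prob := (@pair_prob R N K).

Lemma sum_pair_prob_mul (c : 'I_N -> 'I_N -> R) (i0 j0 : 'I_N) : i0 != j0 ->
  \sum_i \sum_j pair_prob i j * c i j =
  pair_prob i0 i0 * \sum_i c i i + pair_prob i0 j0 * (\sum_i \sum_j c i j - \sum_i c i i).
Proof.
move=> ij0; rewrite !mulr_sumr -sumrB mulr_sumr -big_split /=; apply: eq_bigr => i _.
rewrite (bigD1 i) //= [in RHS](bigD1 i) //= [c i i + _]addrC addrK.
rewrite (pair_prob_diag _ _ i i0); congr (_ + _); rewrite mulr_sumr; apply: eq_bigr => j ji.
by rewrite (pair_prob_off _ _ (i' := i0) (j' := j0)) // eq_sym.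
Qed.

Lemma pair_prob_diagE i : pair_prob i i = K%:R / N%:R.
Proof.
have N0 : N%:R != 0 :> R by rewrite pnatr_eq0 -lt0n (leq_ltn_trans _ (ltn_ord i)).
rewrite -(sum_pair_prob_diag R KN) (eq_bigr (fun=> pair_prob i i)) => [|j _].
  by rewrite sumr_const card_ord -[pair_prob i i *+ N]mulr_natr mulfK.
exact: pair_prob_diag.
Qed.

Lemma pair_prob_offE i j : i != j ->
  pair_prob i j = (K%:R ^+ 2 - K%:R) / (N%:R ^+ 2 - N%:R).
Proof.
move=> ij; have N1 : (1 < N)%N.
  by move: ij (ltn_ord i) (ltn_ord j); rewrite -val_eqE /=; lia.
have NN : N%:R ^+ 2 - N%:R != 0 :> R.
  have N2 : 2 <= N%:R :> R by rewrite ler_nat.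
  by rewrite gt_eqF //; nra.
have E := sum_pair_prob_mul (fun _ _ => 1) ij.
rewrite (eq_bigr (fun k => \sum_l pair_prob k l)) ?sum_pair_prob // in E; last first.
  by move=> k _; apply: eq_bigr => l _; rewrite mulr1.
rewrite !sumr_const card_ord pair_prob_diagE -[N%:R *+ N]mulr_natr -expr2 in E.
have N0 : N%:R != 0 :> R by rewrite pnatr_eq0 -lt0n ltnW.
by rewrite E; field; rewrite N0 NN.
Qed.

End PairProbabilities.

Definition batch_growth (R : realType) (N K : nat) (rho : R) : R :=
  (rho * (N - K)%:R + (K - 1)%:R * N%:R) / (K%:R * (N - 1)%:R).

Lemma batch_growth_gt0 (R : realType) (N K : nat) (rho : R) :
  (2 <= N)%N -> (1 <= K <= N)%N -> 1 <= rho -> 0 < batch_growth N K rho.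
Proof.
move=> N2 /andP[K1 KN] rho1; rewrite /batch_growth !natrB // ?(ltnW N2) //.
have Nr : 2 <= N%:R :> R by rewrite ler_nat.
have Kr : 1 <= K%:R :> R by rewrite ler1n.
have KNr : K%:R <= N%:R :> R by rewrite ler_nat.
by apply: divr_gt0; nra.
Qed.

Lemma batch_growth_ratio (R : realType) (N K : nat) (rho : R) :
  (2 <= N)%N -> (1 <= K <= N)%N -> 1 <= rho ->
  ((N - K)%:R / (N - 1)%:R + N%:R / rho * ((K - 1)%:R / (N - 1)%:R)) * rho =
  K%:R * batch_growth N K rho.
Proof.
move=> N2 /andP[K1 _] rho1.
have rho0 : rho != 0 by rewrite gt_eqF // (lt_le_trans ltr01).
have N1 : (N - 1)%:R != 0 :> R by rewrite pnatr_eq0 subn_eq0 -ltnNge.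
have K0 : K%:R != 0 :> R by rewrite pnatr_eq0 -lt0n.
by rewrite /batch_growth; field; rewrite rho0 N1 K0.
Qed.

Section BatchGradient.
Variables (R : realType) (d N K : nat).
Local Notation vec := 'rV[R]_d.
Local Notation pair_prob := (@pair_prob R N K).
Local Notation batch_avg := (@batch_avg R N K).
Hypothesis KN : (K <= N)%N.

Lemma batch_avg_dot_sum (v : 'I_N -> vec) w :
  batch_avg (fun B => dot (\sum_(i in B) v i) w) = \sum_i pair_prob i i * dot (v i) w.
Proof.
have -> : (fun B : {set 'I_N} => dot (\sum_(i in B) v i) w) =
    fun B => \sum_i (i \in B)%:R * dot (v i) w.
  by apply: funext => B; rewrite dot_suml sum_mem_mul.
rewrite batch_avg_sum; apply: eq_bigr => i _.
by rewrite /pair_prob mulrC -batch_avgZ; congr batch_avg; apply: funext => B; rewrite andbb mulrC.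
Qed.

Lemma batch_avg_dot_sum2 (v : 'I_N -> vec) :
  batch_avg (fun B => dot (\sum_(i in B) v i) (\sum_(i in B) v i)) =
  \sum_i \sum_j pair_prob i j * dot (v i) (v j).
Proof.
have -> : (fun B : {set 'I_N} => dot (\sum_(i in B) v i) (\sum_(i in B) v i)) =
    fun B => \sum_i \sum_j (i \in B)%:R * ((j \in B)%:R * dot (v i) (v j)).
  apply: funext => B; rewrite dot_suml sum_mem_mul; apply: eq_bigr => i _.
  by rewrite dot_sumr sum_mem_mul mulr_sumr.
rewrite batch_avg_sum; apply: eq_bigr => i _; rewrite batch_avg_sum; apply: eq_bigr => j _.
rewrite /pair_prob mulrC -batch_avgZ; congr batch_avg; apply: funext => B.
by rewrite mulrA mulrC -natrM mulnb.
Qed.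

Variable G : 'I_N -> vec -> vec.
Hypothesis K0 : (0 < K)%N.

Lemma batch_grad_mean x w :
  batch_avg (fun B => dot (batch_grad G K B x) w) = dot (gavg G x) w.
Proof.
have N0 : N%:R != 0 :> R by rewrite pnatr_eq0 -lt0n (leq_trans K0).
have K0' : K%:R != 0 :> R by rewrite pnatr_eq0 -lt0n.
under eq_fun do rewrite dotZl.
rewrite batch_avgZ batch_avg_dot_sum /gavg dotZl dot_suml mulr_sumr mulr_sumr.
by apply: eq_bigr => i _; rewrite pair_prob_diagE //; field; rewrite N0 K0'.
Qed.

Hypothesis N2 : (2 <= N)%N.

Lemma batch_grad_growth rho x :
  N%:R^-1 * \sum_i enorm (G i x) ^+ 2 <= rho * enorm (gavg G x) ^+ 2 ->
  batch_avg (fun B => enorm (batch_grad G K B x) ^+ 2) <=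
  batch_growth N K rho * enorm (gavg G x) ^+ 2.
Proof.
pose i0 : 'I_N := Ordinal (ltnW N2); pose j0 : 'I_N := Ordinal N2.
set S := \sum_i _; set P := enorm _ ^+ 2 => SP.
have SE : S = \sum_i dot (G i x) (G i x) by apply: eq_bigr => i _; rewrite sqr_enorm.
have PE : \sum_i \sum_j dot (G i x) (G j x) = N%:R ^+ 2 * P.
  have N0 : N%:R != 0 :> R by rewrite pnatr_eq0 -lt0n ltnW.
  rewrite /P sqr_enorm /gavg dotZl dotZr dot_suml.
  under [in RHS]eq_bigr do rewrite dot_sumr.
  by field.
under eq_fun do rewrite sqr_enorm dotZl dotZr.
have ij0 : i0 != j0 by [].
rewrite !batch_avgZ batch_avg_dot_sum2 (sum_pair_prob_mul _ _ ij0).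
rewrite pair_prob_diagE // pair_prob_offE // -SE PE.
rewrite /batch_growth !natrB // ?(ltnW N2) //.
have Nr : 2 <= N%:R :> R by rewrite ler_nat.
have Kr : 1 <= K%:R :> R by rewrite ler1n.
have KNr : K%:R <= N%:R :> R by rewrite ler_nat.
have SNP : S <= N%:R * (rho * P).
  by rewrite -ler_pdivrMl ?(lt_le_trans _ Nr).
rewrite -subr_ge0.
have -> : (rho * (N%:R - K%:R) + (K%:R - 1) * N%:R) / (K%:R * (N%:R - 1)) * P -
    K%:R^-1 * (K%:R^-1 * (K%:R / N%:R * S +
      (K%:R ^+ 2 - K%:R) / (N%:R ^+ 2 - N%:R) * (N%:R ^+ 2 * P - S))) =
    (N%:R - K%:R) * (rho * N%:R * P - S) / (K%:R * N%:R * (N%:R - 1)).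
  by field; rewrite !gt_eqF //; nra.
by apply: divr_ge0; [apply: mulr_ge0; lra | apply: mulr_ge0; nra].
Qed.

End BatchGradient.

Section BatchSequences.
Variables (R : realType) (N K : nat).
Local Notation batch := {set 'I_N}.
Implicit Types phi psi : (nat -> batch) -> R.

Definition tuple_batches n (t : n.-tuple batch) : nat -> batch :=
  fun j => nth finset.set0 (tval t) j.

Definition sum_batch_seqs n phi : R :=
  \sum_(t : n.-tuple batch | batch_ok K t) phi (tuple_batches t).

Definition extend_batches n (bs : nat -> batch) (B : batch) : nat -> batch :=
  fun j => if (j < n)%N then bs j else if j == n then B else finset.set0.

Lemma tuple_batches_rcons n (t : n.-tuple batch) B :
  tuple_batches [tuple of rcons t B] = extend_batches n (tuple_batches t) B.
Proof. by apply: funext => j; rewrite /tuple_batches /extend_batches nth_rcons size_tuple. Qed.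

Lemma sum_batch_seqs0 phi : sum_batch_seqs 0 phi = phi (fun _ => finset.set0).
Proof.
rewrite /sum_batch_seqs (big_pred1 [tuple]) => [|t]; last by rewrite [t]tuple0; apply/esym/eqP.
by congr phi; apply: funext => j; rewrite /tuple_batches nth_nil.
Qed.

Lemma sum_batch_seqsS n phi : sum_batch_seqs n.+1 phi =
  sum_batch_seqs n (fun bs => \sum_(B : batch | #|B| == K) phi (extend_batches n bs B)).
Proof.
rewrite /sum_batch_seqs (reindex (fun p : n.-tuple batch * batch => [tuple of rcons p.1 p.2])) /=.
  rewrite (eq_bigl (fun p : n.-tuple batch * batch => batch_ok K p.1 && (#|p.2| == K)));
    last by case=> t B; rewrite /batch_ok /= all_rcons andbC.
  rewrite -(pair_big_dep (fun t : n.-tuple batch => batch_ok K t) (fun _ (B : batch) => #|B| == K)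
    (fun t B => phi (tuple_batches [tuple of rcons t B]))) /=.
  by apply: eq_bigr => t _; apply: eq_bigr => B _; rewrite tuple_batches_rcons.
exists (fun t : n.+1.-tuple batch =>
  ([tuple of belast (thead t) (behead t)], last (thead t) (behead t))) => [[t B] _ | t _].
  have E : rcons (belast (thead [tuple of rcons t B]) (behead [tuple of rcons t B]))
      (last (thead [tuple of rcons t B]) (behead [tuple of rcons t B])) = rcons t B.
    by rewrite -lastI -[RHS]/(tval [tuple of rcons t B]) [in RHS](tuple_eta [tuple of rcons t B]).
  by have [tE BE] := rcons_inj E; congr (_, _) => //; apply: val_inj.
by apply: val_inj; rewrite /= -lastI [in RHS](tuple_eta t).
Qed.

Lemma sum_batch_seqs_le n phi psi :
  (forall bs, phi bs <= psi bs) -> sum_batch_seqs n phi <= sum_batch_seqs n psi.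
Proof. by move=> le_phi; rewrite ler_sum. Qed.

Lemma sum_batch_seqsZ n c phi : sum_batch_seqs n (fun bs => c * phi bs) = c * sum_batch_seqs n phi.
Proof. by rewrite /sum_batch_seqs mulr_sumr. Qed.

Lemma sum_batch_seqsZr n c phi : sum_batch_seqs n (fun bs => phi bs * c) = sum_batch_seqs n phi * c.
Proof. by rewrite /sum_batch_seqs mulr_suml. Qed.

Lemma Exp_batchesE n phi :
  Exp_batches K n phi = sum_batch_seqs n phi / sum_batch_seqs n (fun _ => 1).
Proof.
rewrite /Exp_batches -sum1_card natr_sum /sum_batch_seqs.
by congr (_ / _); apply: eq_bigl => t; rewrite inE.
Qed.

Hypothesis KN : (K <= N)%N.

Lemma sum_batch_seqs1_gt0 n : 0 < sum_batch_seqs n (fun _ => 1).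
Proof.
elim: n => [|n IH]; first by rewrite sum_batch_seqs0.
have -> : sum_batch_seqs n.+1 (fun _ => 1) = 'C(N, K)%:R * sum_batch_seqs n (fun _ => 1).
  rewrite sum_batch_seqsS -sum_batch_seqsZ; congr sum_batch_seqs; apply: funext => bs.
  by rewrite sum_batches_cst mulrC mulr1.
by rewrite mulr_gt0 // binr_gt0.
Qed.

Lemma Exp_batches0 phi : Exp_batches K 0 phi = phi (fun _ => finset.set0).
Proof. by rewrite Exp_batchesE !sum_batch_seqs0 divr1. Qed.

Lemma Exp_batchesS n phi : Exp_batches K n.+1 phi =
  Exp_batches K n (fun bs => batch_avg K (fun B => phi (extend_batches n bs B))).
Proof.
have C0 : 'C(N, K)%:R != 0 :> R by rewrite gt_eqF // binr_gt0.
have S0 : sum_batch_seqs n (fun _ => 1) != 0 by rewrite gt_eqF // sum_batch_seqs1_gt0.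
rewrite !Exp_batchesE !sum_batch_seqsS /batch_avg.
have -> : (fun _ : nat -> batch => \sum_(B : batch | #|B| == K) (1 : R)) =
    fun _ => 'C(N, K)%:R * 1.
  by apply: funext => bs; rewrite sum_batches_cst mulrC.
by rewrite sum_batch_seqsZ sum_batch_seqsZr; field; rewrite C0 S0.
Qed.

Lemma ler_Exp_batches n phi psi :
  (forall bs, phi bs <= psi bs) -> Exp_batches K n phi <= Exp_batches K n psi.
Proof.
move=> le_phi; rewrite !Exp_batchesE ler_wpM2r ?sum_batch_seqs_le //.
by rewrite invr_ge0 ltW // sum_batch_seqs1_gt0.
Qed.

Lemma Exp_batchesZ n c phi :
  Exp_batches K n (fun bs => c * phi bs) = c * Exp_batches K n phi.
Proof. by rewrite !Exp_batchesE sum_batch_seqsZ mulrA. Qed.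

End BatchSequences.

Section SmoothConvex.
Local Open Scope classical_set_scope.
Variable R : realType.

Lemma is_derive_quadratic (c k t : R) :
  is_derive t 1 (fun s : R => s * c + s ^+ 2 * k) (c + 2 * t * k).
Proof.
have -> : (fun s : R => s * c + s ^+ 2 * k) = id * cst c + id ^+ 2 * cst k by [].
apply: is_derive_eq; rewrite !scaler0 !add0r /=.
change (c * 1 + k * ((2 * t ^+ 1) * 1) = c + 2 * t * k); rewrite expr1; ring.
Qed.

Lemma le_dnbhs0_limr (q : R -> R) (l c : R) :
  q x @[x --> 0^'] --> l -> (forall u, 0 < u < 1 -> q u <= c) -> l <= c.
Proof.
move=> ql qc; have ql_right : q x @[x --> 0^'+] --> l.
  apply: cvg_trans ql => A [e /= e0 eA]; exists e => //= u ue u0.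
  by apply: eA => //; rewrite gt_eqF.
apply: (cvgr_to_le ql_right); near=> u; apply: qc; apply/andP; split.
  by near: u; exact: nbhs_right_gt.
by near: u; exact: nbhs_right_lt.
Unshelve. all: by end_near.
Qed.

Variables (d : nat) (f : 'rV[R]_d -> R) (g : 'rV[R]_d -> 'rV[R]_d).
Hypothesis f_grad : forall x h, derivable f x h /\ 'D_h f x = dot (g x) h.

Lemma derive_along_line (y h : 'rV[R]_d) (t : R) :
  derivable (fun s : R => f (s *: h + y)) t 1 /\
  'D_1 (fun s : R => f (s *: h + y)) t = dot (g (t *: h + y)) h.
Proof.
have E : (fun u : R => u^-1 *: (((fun s : R => f (s *: h + y)) \o shift t) (u *: 1)
     - f (t *: h + y))) =
   (fun u : R => u^-1 *: ((f \o shift (t *: h + y)) (u *: h) - f (t *: h + y))).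
  apply: funext => u /=; congr (_ *: (f _ - _)).
  by rewrite scalerDl addrA; congr (_ *: _ + _ + _); rewrite /GRing.scale /= mulr1.
by have [D1 D2] := f_grad (t *: h + y) h; rewrite /derivable /derive E.
Qed.

Lemma smooth_descent L : 0 < L -> lipschitz_grad L g ->
  forall y h, f (h + y) <= f y + dot (g y) h + L / 2 * dot h h.
Proof.
move=> L0 Lip y h.
set c := dot (g y) h; set k := L / 2 * dot h h.
pose psi : R -> R := (fun s => f (s *: h + y)) - (fun s => s * c + s ^+ 2 * k).
have psi_derivable t : derivable psi t 1.
  have [? _] := derive_along_line y h t.
  by apply: derivableB => //; exact: ex_derive (is_derive_quadratic c k t).
have psi_deriv t : 'D_1 psi t = dot (g (t *: h + y) - g y) h - 2 * t * k.
  have [? D] := derive_along_line y h t; have Q := is_derive_quadratic c k t.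
  by rewrite deriveB // D derive_val dotBl /c; ring.
have psi'_le0 t : t \in `]0, 1[%R -> psi^`() t <= 0.
  rewrite in_itv /= => /andP[t0 _]; rewrite derive1E psi_deriv subr_le0 /k.
  have Lt0 : 0 < L * t by rewrite mulr_gt0.
  have := Lip (t *: h + y) y; rewrite addrK enormZ (ger0_norm (ltW t0)) mulrA => gh.
  have -> : 2 * t * (L / 2 * dot h h) = L * t * dot h h by field.
  by rewrite dotC; exact: dot_le_enorm.
have psi_cont : {within `[0, 1], continuous psi}.
  by apply: derivable_within_continuous => t _; exact: psi_derivable.
have := ler0_derive1_le_cc (fun t _ => psi_derivable t) psi'_le0 psi_cont.
move=> /(_ 1 0); rewrite !in_itv /= !lexx ler01 => /(_ isT isT isT).
rewrite /psi !fctE /= scale0r scale1r add0r !mul0r expr0n /= mul0r addr0 subr0 mul1r expr1n mul1r.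
lra.
Qed.

Lemma convex_gradient_le : convex_fun f -> forall x y, f y + dot (g y) (x - y) <= f x.
Proof.
move=> fconv x y; have [D1 D2] := f_grad y (x - y).
rewrite -lerBrDl -D2; apply: le_dnbhs0_limr; first exact: D1.
move=> u /andP[u0 u1] /=; rewrite ler_pdivrMl // mulrBr.
have -> : u *: (x - y) + y = u *: x + (1 - u) *: y.
  by rewrite scalerBr scalerBl scale1r -addrA (addrC (- _)).
have := fconv x y u (ltW u0) (ltW u1).
change (u *: (f x - f y)) with (u * (f x - f y)).
lra.
Qed.

End SmoothConvex.

Lemma favg_grad (R : realType) (d N : nat) (F : 'I_N -> 'rV[R]_d -> R)
    (G : 'I_N -> 'rV[R]_d -> 'rV[R]_d) :
  (forall i, is_gradient (F i) (G i)) ->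
  forall x h, derivable (favg F) x h /\ 'D_h (favg F) x = dot (gavg G x) h.
Proof.
move=> FG x h.
have -> : favg F = N%:R^-1 \*: \sum_(i < N) F i by apply: funext => y; rewrite /favg /= fct_sumE.
have dF i : derivable (F i) x h by apply: diff_derivable; exact: (FG i x).1.
have dS : derivable (\sum_(i < N) F i) x h by exact: derivable_sum.
split; first exact: derivableZ.
rewrite deriveZ // derive_sum // /gavg dotZl dot_suml; congr (_ * _); apply: eq_bigr => i _.
by rewrite deriveE ?(FG i x).2 //; exact: (FG i x).1.
Qed.

Definition snag_alpha (R : realType) (n : nat) : R :=
  (n%:R ^+ 2 / (n + 1)%:R) / (2 + n%:R ^+ 2 / (n + 1)%:R).

Lemma snag_alphaE (R : realType) n :
  snag_alpha R n = n%:R ^+ 2 / (n%:R ^+ 2 + 2 * n%:R + 2).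
Proof.
have n0 : 0 <= n%:R :> R := ler0n _ _.
have n1 : n%:R + 1 != 0 :> R by rewrite gt_eqF //; lra.
have n2 : n%:R ^+ 2 + 2 * n%:R + 2 != 0 :> R by rewrite gt_eqF //; nra.
by rewrite /snag_alpha natrD; field; rewrite n1 n2.
Qed.

Section NesterovStep.
Variables (R : realType) (d N K : nat).
Local Notation vec := 'rV[R]_d.
Variables (f : vec -> R) (g : vec -> vec) (L r : R) (xs : vec).
Hypothesis L0 : 0 < L.
Hypothesis r0 : 0 < r.
Hypothesis f_descent : forall y h, f (h + y) <= f y + dot (g y) h + L / 2 * dot h h.
Hypothesis f_convex : forall x y, f y + dot (g y) (x - y) <= f x.
Hypothesis f_min : forall x, f xs <= f x.

Lemma nesterov_coupling n x z y : y = snag_alpha R n *: x + (1 - snag_alpha R n) *: z ->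
  (n + 1)%:R ^+ 2 * (f y - f xs) - 2 * (n + 1)%:R * dot (g y) (z - xs) <=
  n%:R ^+ 2 * (f x - f xs).
Proof.
move=> yE; set a := snag_alpha R n in yE.
have coupling : 2 * (n + 1)%:R * dot (g y) (z - y) = n%:R ^+ 2 * dot (g y) (y - x).
  have n0 : 0 <= n%:R :> R := ler0n _ _.
  have n2 : n%:R ^+ 2 + 2 * n%:R + 2 != 0 :> R by rewrite gt_eqF //; nra.
  have ey : dot (g y) y = a * dot (g y) x + (1 - a) * dot (g y) z.
    by rewrite {2}yE dotDr !dotZr.
  by rewrite !dotBr ey /a snag_alphaE natrD; field.
have Hx := f_convex x y; have Hs := f_convex xs y; have Hy := f_min y.
have Hcz : dot (g y) (z - xs) = dot (g y) (z - y) + dot (g y) (y - xs).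
  by rewrite !dotBr; ring.
rewrite !dotBr in Hx Hs.
have h1 : 2 * (n + 1)%:R * (f y - f xs) <= 2 * (n + 1)%:R * dot (g y) (y - xs).
  by rewrite ler_wpM2l // dotBr; lra.
have h2 : n%:R ^+ 2 * (f y - f x) <= n%:R ^+ 2 * dot (g y) (y - x).
  by rewrite ler_wpM2l ?sqr_ge0 // dotBr; lra.
rewrite Hcz; rewrite natrD in h1 coupling *.
lra.
Qed.

Definition snag_energy (n : nat) (x z : vec) : R :=
  n%:R ^+ 2 / (4 * L * r ^+ 2) * (f x - f xs) + 1 / 2 * dot (z - xs) (z - xs).

Section BatchStep.
Hypothesis KN : (K <= N)%N.
Variables (y : vec) (gB : {set 'I_N} -> vec).
Hypothesis gB_mean : forall w, batch_avg K (fun B => dot (gB B) w) = dot (g y) w.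
Hypothesis gB_growth : batch_avg K (fun B => dot (gB B) (gB B)) <= r * dot (g y) (g y).

Lemma expected_descent :
  batch_avg K (fun B => f (y - (L * r)^-1 *: gB B)) <= f y - (L * r)^-1 / 2 * dot (g y) (g y).
Proof.
set s := (L * r)^-1.
apply: le_trans (@ler_batch_avg _ _ K _ (fun B =>
    f y + (- s) * dot (gB B) (g y) + (L / 2 * s ^+ 2) * dot (gB B) (gB B)) _) _.
  move=> B; have := f_descent y ((- s) *: gB B).
  rewrite addrC !dotZl !dotZr scaleNr (dotC (g y)); lra.
rewrite !batch_avgD !batch_avgZ batch_avg_cst // gB_mean.
have s0 : 0 <= L / 2 * s ^+ 2 by rewrite mulr_ge0 ?sqr_ge0 // divr_ge0 // ltW.
have := ler_wpM2l s0 gB_growth.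
have -> : L / 2 * s ^+ 2 * (r * dot (g y) (g y)) = s / 2 * dot (g y) (g y).
  by rewrite /s; field; rewrite !gt_eqF.
lra.
Qed.

Lemma expected_dist z eta :
  batch_avg K (fun B => dot (z - eta *: gB B - xs) (z - eta *: gB B - xs)) <=
  dot (z - xs) (z - xs) - 2 * eta * dot (g y) (z - xs) + eta ^+ 2 * r * dot (g y) (g y).
Proof.
set w := z - xs.
have -> : (fun B => dot (z - eta *: gB B - xs) (z - eta *: gB B - xs)) =
    fun B => dot w w + (- 2 * eta) * dot (gB B) w + eta ^+ 2 * dot (gB B) (gB B).
  apply: funext => B; rewrite addrAC -/w dotBB !dotZl !dotZr (dotC w); ring.
rewrite !batch_avgD !batch_avgZ batch_avg_cst // gB_mean.
have := ler_wpM2l (sqr_ge0 eta) gB_growth.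
lra.
Qed.

Lemma snag_energy_step n x z : y = snag_alpha R n *: x + (1 - snag_alpha R n) *: z ->
  batch_avg K (fun B => snag_energy n.+1 (y - (L * r)^-1 *: gB B)
    (z - (L * r ^+ 2)^-1 * ((n + 1)%:R / 2) *: gB B)) <= snag_energy n x z.
Proof.
move=> yE; set eta := (L * r ^+ 2)^-1 * _.
rewrite /snag_energy batch_avgD !batch_avgZ batch_avgD batch_avg_cst //.
set A := (4 * L * r ^+ 2)^-1; set s := (L * r)^-1.
set G2 := dot (g y) (g y); set D := dot (g y) (z - xs); set W := dot (z - xs) (z - xs).
have A0 : 0 <= A by rewrite invr_ge0 !mulr_ge0 ?sqr_ge0 // ltW.
apply: le_trans (_ : _ <= n.+1%:R ^+ 2 / (4 * L * r ^+ 2) * (f y - s / 2 * G2 - f xs)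
    + 1 / 2 * (W - 2 * eta * D + eta ^+ 2 * r * G2)) _.
  apply: lerD; apply: ler_wpM2l.
  - by rewrite mulr_ge0 ?sqr_ge0.
  - by rewrite lerD2r; exact: expected_descent.
  - by rewrite divr_ge0.
  - exact: expected_dist.
have -> : n.+1%:R ^+ 2 / (4 * L * r ^+ 2) * (f y - s / 2 * G2 - f xs)
    + 1 / 2 * (W - 2 * eta * D + eta ^+ 2 * r * G2) =
    A * ((n + 1)%:R ^+ 2 * (f y - f xs) - 2 * (n + 1)%:R * D) + 1 / 2 * W.
  by rewrite /A /s /eta addn1; field; rewrite !gt_eqF.
by rewrite lerD2r [_ * A]mulrC -[A * _ * _]mulrA ler_wpM2l //; exact: nesterov_coupling.
Qed.

End BatchStep.
End NesterovStep.

Section SnagIterates.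
Variables (R : realType) (d N : nat) (G : 'I_N -> 'rV[R]_d -> 'rV[R]_d) (K : nat).
Variables (s beta : R) (alpha eta : nat -> R) (x0 : 'rV[R]_d).

Lemma snag_prefix (bs bs' : nat -> {set 'I_N}) n :
  (forall j, (j < n)%N -> bs j = bs' j) ->
  snag G K s beta alpha eta x0 bs n = snag G K s beta alpha eta x0 bs' n.
Proof.
elim: n => [//|n IH] bsE /=.
by rewrite IH ?bsE // => j jn; apply: bsE; exact: ltnW.
Qed.

Lemma snag_extend bs n B :
  snag G K s beta alpha eta x0 (extend_batches n bs B) n.+1 =
  let: (x, z) := snag G K s beta alpha eta x0 bs n in
  let y := alpha n *: x + (1 - alpha n) *: z in
  let gy := batch_grad G K B y in
  (y - s *: gy, beta *: z + (1 - beta) *: y - eta n *: gy).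
Proof.
rewrite /= (@snag_prefix _ bs) => [|j jn]; last by rewrite /extend_batches jn.
by rewrite /extend_batches ltnn eqxx.
Qed.

End SnagIterates.

Section SnagRate.
Variables (R : realType) (d N : nat) (F : 'I_N -> 'rV[R]_d -> R).
Variables (G : 'I_N -> 'rV[R]_d -> 'rV[R]_d) (L rho : R) (xs x0 : 'rV[R]_d) (K : nat).
Hypothesis N2 : (2 <= N)%N.
Hypothesis FG : forall i, is_gradient (F i) (G i).
Hypothesis f_convex : convex_fun (favg F).
Hypothesis L0 : 0 < L.
Hypothesis g_lipschitz : lipschitz_grad L (gavg G).
Hypothesis f_min : forall x, favg F xs <= favg F x.
Hypothesis rho1 : 1 <= rho.
Hypothesis G_growth : strong_growth1 G rho.
Hypothesis K1 : (1 <= K <= N)%N.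

Local Notation r := (batch_growth N K rho).
Local Notation iterate bs n := (snag G K (L * r)^-1 1 (@snag_alpha R)
  (fun n => (L * r ^+ 2)^-1 * ((n + 1)%:R / 2)) x0 bs n).

Lemma snag_energy_bound n :
  Exp_batches K n (fun bs => snag_energy (favg F) L r xs n (iterate bs n).1 (iterate bs n).2)
  <= 1 / 2 * dot (x0 - xs) (x0 - xs).
Proof.
have [K0 KN] := andP K1.
have f_grad := favg_grad FG.
elim: n => [|n IH]; first by rewrite Exp_batches0 /snag_energy /= expr0n !mul0r add0r.
rewrite Exp_batchesS //; apply: le_trans IH; apply: (ler_Exp_batches KN) => bs.
under eq_fun do rewrite snag_extend.
case: (iterate bs n) => x z /=.
set y := snag_alpha R n *: x + _.
under eq_fun do rewrite scale1r subrr scale0r addr0.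
apply: snag_energy_step => //.
- exact: batch_growth_gt0.
- exact: smooth_descent.
- exact: convex_gradient_le.
- exact: batch_grad_mean.
- under eq_fun do rewrite -sqr_enorm.
  by rewrite -sqr_enorm; apply: batch_grad_growth.
Qed.

Lemma snag_rate n :
  n%:R ^+ 2 * Exp_batches K n (fun bs => favg F (iterate bs n).1 - favg F xs)
  <= 2 * L * r ^+ 2 * enorm (x0 - xs) ^+ 2.
Proof.
have [_ KN] := andP K1.
have r0 := batch_growth_gt0 N2 K1 rho1.
have c0 : 0 < 4 * L * r ^+ 2 by apply: mulr_gt0; [exact: mulr_gt0 | exact: exprn_gt0].
have lower : Exp_batches K n (fun bs => n%:R ^+ 2 / (4 * L * r ^+ 2) *
      (favg F (iterate bs n).1 - favg F xs)) <=
    Exp_batches K n (fun bs => snag_energy (favg F) L r xs n (iterate bs n).1 (iterate bs n).2).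
  by apply: (ler_Exp_batches KN) => bs; rewrite lerDl mulr_ge0 ?dot_ge0.
rewrite sqr_enorm; have := le_trans lower (snag_energy_bound n).
rewrite Exp_batchesZ mulrAC ler_pdivrMr //.
lra.
Qed.

End SnagRate.

Lemma le_of_sqr_rate (R : realType) (X L r e eps m : R) :
  0 < eps -> 0 < L -> 0 <= r -> 0 <= e -> 0 < m ->
  r * Num.sqrt (2 * L / eps) * e <= m -> m ^+ 2 * X <= 2 * L * r ^+ 2 * e ^+ 2 -> X <= eps.
Proof.
move=> eps0 L0 r0 e0 m0 rm mX.
have sq0 : 0 <= 2 * L / eps by rewrite divr_ge0 // ?mulr_ge0 // ltW.
have : 2 * L * r ^+ 2 * e ^+ 2 <= eps * m ^+ 2.
  have -> : 2 * L * r ^+ 2 * e ^+ 2 = eps * (r * Num.sqrt (2 * L / eps) * e) ^+ 2.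
    by rewrite !exprMn sqr_sqrtr //; field; rewrite gt_eqF.
  by rewrite ler_pM2l // ler_sqr ?nnegrE ?mulr_ge0 ?sqrtr_ge0 // ltW.
rewrite [eps * _]mulrC => /(le_trans mX).
by rewrite ler_pM2l // exprn_gt0.
Qed.

Theorem theorem5 (R : realType) (d N : nat) (F : 'I_N -> 'rV[R]_d -> R)
  (G : 'I_N -> 'rV[R]_d -> 'rV[R]_d) (L rho1 : R) (xstar : 'rV[R]_d) (K : nat) :
  (2 <= N)%N ->
  (forall i, is_gradient (F i) (G i)) ->
  (forall i, continuous (G i)) ->
  convex_fun (favg F) ->
  0 < L -> lipschitz_grad L (gavg G) ->
  (forall x, favg F xstar <= favg F x) ->
  1 <= rho1 -> strong_growth1 G rho1 ->
  (1 <= K <= N)%N ->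
  let rhoK := (rho1 * (N - K)%:R + (K - 1)%:R * N%:R) / (K%:R * (N - 1)%:R) in
  let s := (L * rhoK)^-1 in
  let eta := fun n : nat => (L * rhoK ^+ 2)^-1 * ((n + 1)%:R / 2) in
  let beta := 1 in
  let alpha := fun n : nat =>
    (n%:R ^+ 2 / (n + 1)%:R) / (2 + n%:R ^+ 2 / (n + 1)%:R) in
  let DeltaK := (N - K)%:R / (N - 1)%:R + N%:R / rho1 * ((K - 1)%:R / (N - 1)%:R) in
  forall (x0 : 'rV[R]_d) (eps : R) (n : nat), 0 < eps ->
    DeltaK * rho1 * Num.sqrt (2 * L / eps) * enorm (x0 - xstar) <= (n * K)%:R ->
    Exp_batches K n
      (fun bs => favg F (snag G K s beta alpha eta x0 bs n).1 - favg F xstar)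
      <= eps.
Proof.
move=> N2 FG _ f_convex L0 g_lipschitz f_min rho1_ge1 G_growth K1.
move=> rhoK s eta beta alpha DeltaK x0 eps n eps0 enough_grads.
have rhoK0 : 0 < rhoK := batch_growth_gt0 N2 K1 rho1_ge1.
have rate : n%:R ^+ 2 * Exp_batches K n
    (fun bs => favg F (snag G K s beta alpha eta x0 bs n).1 - favg F xstar)
    <= 2 * L * rhoK ^+ 2 * enorm (x0 - xstar) ^+ 2.
  exact (snag_rate x0 N2 FG f_convex L0 g_lipschitz f_min rho1_ge1 G_growth K1 n).
have DeltaKE : DeltaK * rho1 = K%:R * rhoK := batch_growth_ratio N2 K1 rho1_ge1.
clearbody rhoK s eta beta alpha DeltaK.
have sq0 : 0 < Num.sqrt (2 * L / eps) by rewrite sqrtr_gt0 divr_gt0 // mulr_gt0.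
have enough_iters : rhoK * Num.sqrt (2 * L / eps) * enorm (x0 - xstar) <= n%:R.
  rewrite -(ler_pM2l (_ : 0 < K%:R)); last by rewrite ltr0n; case/andP: K1.
  by rewrite !mulrA -DeltaKE [K%:R * _]mulrC -natrM.
clear enough_grads; case: n => [|n] in enough_iters rate *.
  have : rhoK * Num.sqrt (2 * L / eps) * enorm (x0 - xstar) == 0.
    by rewrite eq_le enough_iters !mulr_ge0 ?enorm_ge0 // ltW.
  rewrite !mulf_eq0 (gt_eqF rhoK0) (gt_eqF sq0) /= enorm_eq0 subr_eq0 => /eqP x0E.
  by rewrite Exp_batches0 //= x0E subrr ltW.
apply: le_of_sqr_rate rate => //; first exact: ltW.
exact: enorm_ge0.
Qed.
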